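(* Let $I$ be a BPPS instance with $d$ scenarios and let $\mathcal{B}$ be a minimal solution for $I$. Then $\mathrm{val}_{VBPP}(\mathcal{B})\le\sqrt{d}\,\mathrm{val}_{BPPS}(\mathcal{B})$, where $\mathrm{val}_{VBPP}(\mathcal{B})=|\mathcal{B}|$.
   Context: BPPS: given a number $d$ of scenarios, a set $\mathcal{I}=\{1,\dots,n\}$ of items, each item $i$ having a size $s_i\in\mathbb{Q}_+$ and a set of scenarios $\mathcal{K}_i\subseteq\{1,\dots,d\}$, and unlimited identical bins of capacity $1$ (instances are normalized so that the capacity is $1$). For each scenario $k$, $S_k=\{i\in\mathcal{I}: k\in\mathcal{K}_i\}$. A solution is a partition $\mathcal{B}$ of $\mathcal{I}$ (into nonempty parts, called bins) such that for every $B\in\mathcal{B}$ and every scenario $k$, $\sum_{i\in B\cap S_k}s_i\le 1$. Its value is $\mathrm{val}_{BPPS}(\mathcal{B})=\max_{k\in[d]}|\{B\in\mathcal{B}: B\cap S_k\neq\emptyset\}|$. A solution $\mathcal{B}$ is minimal if for any two distinct bins $A,B\in\mathcal{B}$ there is a scenario $k$ with $\sum_{i\in A\cap S_k}s_i+\sum_{i\in B\cap S_k}s_i>1$. *)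

From mathcomp Require Import all_boot all_order all_algebra.
Set Implicit Arguments. Unset Strict Implicit. Unset Printing Implicit Defensive.
Import Order.TTheory GRing.Theory Num.Theory.
Local Open Scope ring_scope.

(* A BPPS instance: n items ('I_n), d scenarios ('I_d), sizes s : 'I_n -> rat,
   scenario sets K : 'I_n -> {set 'I_d}. Capacity normalized to 1. *)

Definition load n d (s : 'I_n -> rat) (K : 'I_n -> {set 'I_d})
  (B : {set 'I_n}) (k : 'I_d) : rat :=
  \sum_(i in B | k \in K i) s i.

Definition is_solution n d (s : 'I_n -> rat) (K : 'I_n -> {set 'I_d})
  (P : {set {set 'I_n}}) : Prop :=
  partition P [set: 'I_n] /\
  (forall B k, B \in P -> load s K B k <= 1).

Definition val_BPPS n d (K : 'I_n -> {set 'I_d}) (P : {set {set 'I_n}}) : nat :=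
  \max_(k < d) #|[set B in P | [exists i in B, k \in K i]]|.

Definition val_VBPP n (P : {set {set 'I_n}}) : nat := #|P|.

(* minimality: no two distinct bins can be merged *)
Definition is_minimal n d (s : 'I_n -> rat) (K : 'I_n -> {set 'I_d})
  (P : {set {set 'I_n}}) : Prop :=
  forall A B, A \in P -> B \in P -> A != B ->
    exists k : 'I_d, load s K A k + load s K B k > 1.

From mathcomp Require Import all_boot all_order all_algebra.
From mathcomp Require Import lra.
Set Implicit Arguments. Unset Strict Implicit.
Import Order.TTheory GRing.Theory Num.Theory.
Local Open Scope ring_scope.

(* Call a bin active in scenario k if it meets S_k. In a minimal solution any
   two bins A, B (possibly equal) are active in a common scenario: for A != B
   take a scenario where their loads sum to more than 1, which makes both loads
   positive since each is at most 1 (so the sizes need not be nonnegative); for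
   A = B use that bins and scenario sets are nonempty. Hence the |P|^2 ordered
   pairs of bins are covered by the d squares M_k x M_k, M_k the set of bins
   active in k, and |M_k| <= val_BPPS gives |P|^2 <= d val_BPPS^2. *)

Lemma load_gt0_meet n d (s : 'I_n -> rat) (K : 'I_n -> {set 'I_d})
    (B : {set 'I_n}) (k : 'I_d) :
  0 < load s K B k -> [exists i in B, k \in K i].
Proof.
apply: contraTT => /existsPn noitem; rewrite -leNgt /load big1 // => i /andP[iB ik].
by move: (noitem i); rewrite iB ik.
Qed.

Lemma card_bigcup_leq_sum (T : finType) d (F : 'I_d -> {set T}) :
  (#|\bigcup_(k < d) F k| <= \sum_(k < d) #|F k|)%N.
Proof.
elim/big_rec2: _ => [|k m X _ IH]; first by rewrite cards0.
by apply: leq_trans (leq_card_setU _ _) _; rewrite leq_add2l.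
Qed.

Lemma card_sq_leq_pair_cover (T : finType) d (P : {set T})
    (M : 'I_d -> {set T}) (m : nat) :
  {in P &, forall A B, exists k, (A \in M k) && (B \in M k)} ->
  (forall k, #|M k| <= m)%N ->
  (#|P| * #|P| <= d * (m * m))%N.
Proof.
move=> covered card_M.
have sub : setX P P \subset \bigcup_(k < d) setX (M k) (M k).
  apply/subsetP => -[A B]; rewrite in_setX => /andP[AP BP].
  have [k /andP[Ak Bk]] := covered A B AP BP.
  by apply/bigcupP; exists k; rewrite ?in_setX ?Ak.
rewrite -cardsX; apply: leq_trans (subset_leq_card sub) _.
apply: leq_trans; first exact: card_bigcup_leq_sum.
rewrite -[X in (_ <= X * _)%N]card_ord -sum_nat_const.
by apply: leq_sum => k _; rewrite cardsX leq_mul.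
Qed.

Section MinimalSolution.

Variables (n d : nat) (s : 'I_n -> rat) (K : 'I_n -> {set 'I_d}).
Variable P : {set {set 'I_n}}.
Hypothesis hK : forall i, K i != set0.
Hypothesis hsol : is_solution s K P.
Hypothesis hmin : is_minimal s K P.

Definition active_bins (k : 'I_d) : {set {set 'I_n}} :=
  [set B in P | [exists i in B, k \in K i]].

Lemma card_active_bins_leq k : (#|active_bins k| <= val_BPPS K P)%N.
Proof. exact: (leq_bigmax_cond k). Qed.

Lemma bins_share_active_scenario :
  {in P &, forall A B, exists k, (A \in active_bins k) && (B \in active_bins k)}.
Proof.
case: hsol => /and3P[_ _ P0] cap A B AP BP.
suff [k meetAB] : exists k, [exists i in A, k \in K i] && [exists i in B, k \in K i].
  by exists k; rewrite !inE AP BP.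
have [<-|AneB] := eqVneq A B.
  have /set0Pn[i iA] : A != set0 by apply: contraNneq P0 => <-.
  have /set0Pn[k ik] := hK i.
  by exists k; rewrite andbb; apply/existsP; exists i; rewrite iA.
have [k over] := hmin AP BP AneB; exists k.
have capA := cap A k AP; have capB := cap B k BP.
have loadA : 0 < load s K A k by lra.
have loadB : 0 < load s K B k by lra.
by rewrite (load_gt0_meet loadA) (load_gt0_meet loadB).
Qed.

End MinimalSolution.

Lemma natr_leq_sqrt_mul (R : rcfType) (a b c : nat) :
  (a * a <= c * (b * b))%N -> (a%:R : R) <= Num.sqrt c%:R * b%:R.
Proof.
have sqrt_sq (m : nat) : (m%:R : R) = Num.sqrt (m * m)%:R.
  by rewrite natrM -expr2 sqrtr_sqr ger0_norm.
rewrite [X in _ <= _ * X]sqrt_sq [X in X <= _]sqrt_sq -sqrtrM // -natrM.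
by move=> le; rewrite ler_wsqrtr // ler_nat.
Qed.

Theorem theorem1 (R : rcfType) (n d : nat) (s : 'I_n -> rat)
  (K : 'I_n -> {set 'I_d}) (P : {set {set 'I_n}})
  (hs : forall i, 0 <= s i)
  (hK : forall i, K i != set0)
  (hsol : is_solution s K P)
  (hmin : is_minimal s K P) :
  (val_VBPP P)%:R <= Num.sqrt (d%:R : R) * (val_BPPS K P)%:R.
Proof.
apply: natr_leq_sqrt_mul; apply: card_sq_leq_pair_cover.
- exact: bins_share_active_scenario hK hsol hmin.
- exact: card_active_bins_leq.
Qed.
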